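(* Let $k\geq 1$ be an integer and $\lambda>0$ a real number. Let $f_k(x;\lambda)$ denote the probability mass function of the Poisson distribution of order $k$ with parameter $\lambda$. Then every mode $m_{k,\lambda}$ of $f_k(\cdot;\lambda)$ (i.e., every nonnegative integer $x$ at which $f_k(x;\lambda)$ attains its maximum over $x\in\{0,1,2,\dots\}$) satisfies \[ \left\lfloor \frac{\lambda k(k+1)}{2}\right\rfloor - \frac{k(k+1)}{2} + 1 - \delta_{k,1} \;\leq\; m_{k,\lambda} \;\leq\; \left\lfloor \frac{\lambda k(k+1)}{2}\right\rfloor, \] where $\delta_{k,1}$ is the Kronecker delta ($\delta_{k,1}=1$ if $k=1$ and $0$ otherwise).
   Context: For a positive integer $k$ and real $\lambda>0$, the Poisson distribution of order $k$ with parameter $\lambda$ is the distribution on $\{0,1,2,\dots\}$ with probability mass function \[ f_k(x;\lambda)=\sum e^{-k\lambda}\frac{\lambda^{x_1+x_2+\cdots+x_k}}{x_1!\,x_2!\cdots x_k!},\qquad x=0,1,2,\dots, \] where the sum is over all $k$-tuples $(x_1,\dots,x_k)$ of nonnegative integers with $x_1+2x_2+\cdots+kx_k=x$. Equivalently, its probability generating function is $\sum_{x\ge0}f_k(x;\lambda)s^x=e^{\lambda(-k+s+s^2+\cdots+s^k)}$. For $k=1$ it is the ordinary Poisson distribution. $\lfloor u\rfloor$ denotes the greatest integer not exceeding $u$. *)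

From HB Require Import structures.
From mathcomp Require Import all_boot all_order all_algebra.
From mathcomp Require Import all_classical all_reals all_analysis.
Set Implicit Arguments. Unset Strict Implicit. Unset Printing Implicit Defensive.
Import Order.TTheory GRing.Theory Num.Theory.
Local Open Scope ring_scope.

(* Poisson distribution of order k with parameter lam:
   f_k(x;lam) = sum over (x_1,...,x_k) in N^k with x_1 + 2 x_2 + ... + k x_k = x
                of e^{-k lam} lam^{x_1+...+x_k} / (x_1! ... x_k!).
   A tuple is a finite function t : 'I_k -> 'I_(x+1) (each x_i <= x necessarily),
   where t i stands for x_{i+1}. *)
Definition poisson_order_pmf (R : realType) (k : nat) (lam : R) (x : nat) : R :=
  \sum_(t : {ffun 'I_k -> 'I_x.+1} | (\sum_(i < k) (i.+1 * t i))%N == x)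
     expR (- (k%:R * lam)) * lam ^+ (\sum_(i < k) (t i : nat))%N
       / (\prod_(i < k) ((t i : nat)`!))%:R.

Definition is_mode (R : realType) (f : nat -> R) (x : nat) : Prop :=
  forall y : nat, f y <= f x.

From HB Require Import structures.
From mathcomp Require Import all_boot all_order all_algebra.
From mathcomp Require Import all_classical all_reals all_analysis.
From mathcomp Require Import ring lra zify.
Import Order.TTheory GRing.Theory Num.Theory.
Local Open Scope ring_scope.

(* Write f_k(y) = e^{-k lam} F(y), F(y) being the total mass lam^|t| / t! of
   the tuples t of degree y.  Removing one part of size i from a tuple gives
   the moment identities sum_t t_i mass(t) = lam F(y - i) and
   sum_t t_i^2 mass(t) = lam sum_s (s_i + 1) mass(s), over the tuples t of
   degree y and s of degree y - i (for i <= y); weighting the first by i and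
   summing gives the recursion y F(y) = lam sum_i i F(y - i).
   At a mode m, with K = k(k+1)/2, the recursion gives m <= lam K.
   Cauchy-Schwarz between the two moments gives lam F(m) <= (lam + 1) F(m + i)
   for 1 <= i <= k, and feeding this into the recursion at m + k together
   with F(m + k) <= F(m) yields lam (lam K + k) <= (lam + 1) (m + k), which
   is the lower bound. *)

Lemma sum_weighted_sqr_le (R : realDomainType) (I : finType) (P : pred I)
    (a x : I -> R) :
  (forall i, P i -> 0 <= a i) ->
  (\sum_(i | P i) a i * x i) ^+ 2 <=
    (\sum_(i | P i) a i) * \sum_(i | P i) a i * x i ^+ 2.
Proof.
move=> a_ge0.
set A := \sum_(i | P i) a i; set B := \sum_(i | P i) a i * x i.
set C := \sum_(i | P i) a i * x i ^+ 2.
have expand s : \sum_(t | P t) a s * a t * (x s - x t) ^+ 2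
    = a s * x s ^+ 2 * A - a s * x s * (2 * B) + a s * C.
  rewrite /A /B /C !mulr_sumr -sumrB -big_split /=.
  by apply: eq_bigr => t _; ring.
have : 0 <= \sum_(s | P s) \sum_(t | P t) a s * a t * (x s - x t) ^+ 2.
  apply: sumr_ge0 => s Ps; apply: sumr_ge0 => t Pt.
  by rewrite mulr_ge0 ?sqr_ge0 ?mulr_ge0 ?a_ge0.
under eq_bigr do rewrite expand.
rewrite big_split /= sumrB -!mulr_suml -/A -/B -/C.
lra.
Qed.

Lemma sum_ord_succ_double k : ((\sum_(i < k) i.+1).*2 = k * k.+1)%N.
Proof.
by elim: k => [|k IHk]; rewrite ?big_ord0 // big_ord_recr /= doubleD IHk; lia.
Qed.

Lemma sum_ord_succ_last k : (\sum_(i < k) i.+1 * (i.+1 == k) = k)%N.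
Proof.
case: k => [|k]; first by rewrite big_ord0.
rewrite big_ord_recr /= eqxx muln1 big1 // => i _.
by rewrite eqSS ltn_eqF ?muln0.
Qed.

Section PoissonOrderMass.
Context {R : realType} {k : nat} {lam : R}.
Hypothesis lam_gt0 : 0 < lam.

Definition tdeg (u : 'I_k -> nat) : nat := \sum_(j < k) j.+1 * u j.
Definition tlen (u : 'I_k -> nat) : nat := \sum_(j < k) u j.
Definition tfact (u : 'I_k -> nat) : nat := \prod_(j < k) (u j)`!.
Definition tmass (u : 'I_k -> nat) : R := lam ^+ tlen u / (tfact u)%:R.

Lemma tfact_gt0 u : (0 < tfact u)%N.
Proof. by apply/prodn_gt0 => j; rewrite fact_gt0. Qed.

Lemma tmass_ge0 u : 0 <= tmass u.
Proof. by rewrite divr_ge0 // exprn_ge0 // ltW. Qed.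

Lemma part_le_tdeg u (i : 'I_k) : (i.+1 * u i <= tdeg u)%N.
Proof. by rewrite /tdeg (bigD1 i) //= leq_addr. Qed.

Section AddPart.
Variables (u v : 'I_k -> nat) (i : 'I_k).
Hypothesis v_def : forall j, v j = (u j + (j == i))%N.

Lemma sum_add_part (a : 'I_k -> nat) :
  (\sum_(j < k) a j * v j = \sum_(j < k) a j * u j + a i)%N.
Proof.
under eq_bigr do rewrite v_def mulnDr.
rewrite big_split /=; congr (_ + _)%N.
rewrite (bigD1 i) //= eqxx muln1 big1 ?addn0 // => j /negbTE ->.
by rewrite muln0.
Qed.

Lemma tdeg_add_part : tdeg v = (tdeg u + i.+1)%N.
Proof. exact: sum_add_part. Qed.

Lemma tlen_add_part : tlen v = (tlen u + 1)%N.
Proof.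
have := sum_add_part (fun _ => 1%N).
by under eq_bigr do rewrite mul1n; under [in RHS]eq_bigr do rewrite mul1n.
Qed.

Lemma tfact_add_part : tfact v = ((u i).+1 * tfact u)%N.
Proof.
rewrite /tfact (bigD1 i) //= [in RHS](bigD1 i) //= v_def eqxx addn1 factS mulnA.
by congr (_ * _)%N; apply: eq_bigr => j /negbTE ji; rewrite v_def ji addn0.
Qed.

Lemma tmass_add_part : tmass v * (v i)%:R = lam * tmass u.
Proof.
rewrite /tmass tlen_add_part tfact_add_part v_def eqxx !addn1 exprS natrM.
have ui_neq0 : ((u i).+1%:R : R) != 0 by rewrite pnatr_eq0.
have fact_neq0 : ((tfact u)%:R : R) != 0 by rewrite pnatr_eq0 -lt0n tfact_gt0.
by field; apply/andP.
Qed.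

End AddPart.
Arguments tdeg_add_part {u v i}.
Arguments tmass_add_part {u v i}.

(* [poisson_order_pmf] at [y] sums over the box of tuples with entries at
   most [n = y]; by [box_mass_widen] the cap is immaterial once [y <= n], so
   all degrees up to [n] can be compared inside a single box. *)
Section Box.
Variable n : nat.
Local Notation box := {ffun 'I_k -> 'I_n.+1}.

Definition tnat (t : box) : 'I_k -> nat := fun j => t j.

Definition box_mass (y : nat) : R :=
  \sum_(t : box | tdeg (tnat t) == y) tmass (tnat t).

Definition box_moment1 (y : nat) (i : 'I_k) : R :=
  \sum_(t : box | tdeg (tnat t) == y) tmass (tnat t) * (t i)%:R.

Lemma box_mass_ge0 y : 0 <= box_mass y.
Proof. by apply: sumr_ge0 => t _; apply: tmass_ge0. Qed.

Lemma box_mass0_ge1 : 1 <= box_mass 0.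
Proof.
pose t0 : box := [ffun _ => ord0].
have tnat_t0 j : tnat t0 j = 0%N by rewrite /tnat ffunE.
have deg_t0 : tdeg (tnat t0) == 0%N.
  by rewrite /tdeg big1 // => j _; rewrite tnat_t0 muln0.
rewrite /box_mass (bigD1 t0) //= ler_wpDr ?sumr_ge0 // => [t _|].
  exact: tmass_ge0.
rewrite /tmass /tlen /tfact big1 ?expr0 => [|j _]; last exact: tnat_t0.
by rewrite big1 ?divr1 // => j _; rewrite tnat_t0.
Qed.

Definition box_add_part (i : 'I_k) (s : box) : box :=
  [ffun j => inord (s j + (j == i))].
Definition box_sub_part (i : 'I_k) (t : box) : box :=
  [ffun j => inord (t j - (j == i))].

Lemma box_add_partE {i} {s : box} : (s i < n)%N ->
  forall j, tnat (box_add_part i s) j = (tnat s j + (j == i))%N.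
Proof.
move=> si j; rewrite /tnat ffunE inordK //.
by case: (eqVneq j i) => [->|_]; rewrite ?addn1 ?addn0.
Qed.

Lemma box_add_part_full i (s : box) : (n <= s i)%N -> box_add_part i s i = ord0.
Proof.
move=> ns; apply/val_inj; rewrite ffunE /= eqxx addn1 /inord /insubd insubF //.
by apply/negbTE; rewrite -leqNgt ltnS.
Qed.

Lemma box_sub_partK i : {in [pred t : box | 0 < t i]%N,
  cancel (box_sub_part i) (box_add_part i)}.
Proof.
move=> t ti; apply/ffunP => j; rewrite !ffunE; apply/val_inj => /=.
have tj_lt : (t j - (j == i) < n.+1)%N by rewrite (leq_ltn_trans (leq_subr _ _)).
rewrite (inordK tj_lt) subnK ?inord_val //.
by case: (eqVneq j i) => [->|].
Qed.

Lemma box_add_partK i (s : box) : (s i < n)%N ->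
  box_sub_part i (box_add_part i s) = s.
Proof.
move=> si; apply/ffunP => j; apply/val_inj.
by rewrite ffunE /= -/(tnat _ j) box_add_partE // addnK inord_val.
Qed.

(* Removing one part of size [i.+1] maps the tuples of degree [y] with
   [t i > 0] bijectively onto those of degree [y - i.+1]; no tuple of the
   smaller degree has its [i]-th entry at the cap [n], since [y <= n]. *)
Lemma box_moment_shift y (i : 'I_k) (c : nat -> R) :
  (i < y)%N -> (y <= n)%N ->
  \sum_(t : box | tdeg (tnat t) == y) tmass (tnat t) * ((t i)%:R * c (t i))
  = lam * \sum_(s : box | tdeg (tnat s) == (y - i.+1)%N)
            tmass (tnat s) * c (s i).+1.
Proof.
move=> iy yn.
rewrite (bigID (fun t : box => 0 < t i)%N) /= [X in _ + X]big1 ?addr0; last first.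
  by move=> t /andP[_]; rewrite -eqn0Ngt => /eqP ->; rewrite mul0r mulr0.
rewrite (reindex_onto (box_add_part i) (box_sub_part i)); last first.
  by move=> t /andP[_ ti]; apply: box_sub_partK.
rewrite mulr_sumr; apply: eq_big => s.
  have [si|ns] := ltnP (s i) n.
    have add_i : (box_add_part i s i : nat) = (s i).+1.
      by rewrite -/(tnat _ i) box_add_partE // eqxx addn1.
    rewrite box_add_partK // eqxx andbT add_i /= andbT.
    rewrite (tdeg_add_part (box_add_partE si)).
    by apply/eqP/eqP => [<-|->]; rewrite ?addnK ?subnK.
  rewrite box_add_part_full //= andbF; apply/esym/negbTE/eqP => deg_s.
  have := leq_trans (leq_mul (leqnn i.+1) ns) (part_le_tdeg (tnat s) i).
  by rewrite deg_s mulSn; lia.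
move=> /andP[/andP[_ pos_i] _].
have si : (s i < n)%N.
  by rewrite ltnNge; apply: contraTN pos_i => ns; rewrite box_add_part_full.
have add_i : (box_add_part i s i : nat) = (s i).+1.
  by rewrite -/(tnat _ i) box_add_partE // eqxx addn1.
rewrite add_i mulrA -/(tnat _ i).
have := tmass_add_part (box_add_partE si); rewrite /tnat add_i => ->.
by rewrite mulrA.
Qed.

Lemma box_moment1_shift y (i : 'I_k) : (i < y)%N -> (y <= n)%N ->
  box_moment1 y i = lam * box_mass (y - i.+1).
Proof.
move=> iy yn; rewrite /box_moment1; have := box_moment_shift y i (fun=> 1) iy yn.
under eq_bigr do rewrite mulr1; move=> ->.
by congr (_ * _); apply: eq_bigr => t _; rewrite mulr1.
Qed.

Lemma box_moment1_small y (i : 'I_k) : (y <= i)%N -> box_moment1 y i = 0.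
Proof.
move=> yi; apply: big1 => t /eqP deg_t.
have := part_le_tdeg (tnat t) i; rewrite deg_t /tnat /= => ti_le.
suff -> : (t i : nat) = 0%N by rewrite mulr0.
apply/eqP; rewrite -leqn0 leqNgt; apply/negP => ti_gt0.
by have := leq_trans (leq_pmulr i.+1 ti_gt0) ti_le; lia.
Qed.

Lemma box_moment2_shift y (i : 'I_k) : (i < y)%N -> (y <= n)%N ->
  \sum_(t : box | tdeg (tnat t) == y) tmass (tnat t) * (t i)%:R ^+ 2
  = lam * (box_moment1 (y - i.+1) i + box_mass (y - i.+1)).
Proof.
move=> iy yn; under eq_bigr do rewrite expr2.
rewrite (box_moment_shift y i (fun x => x%:R)) // /box_moment1 /box_mass -big_split.
by congr (_ * _); apply: eq_bigr => t _; rewrite -natr1 mulrDr mulr1.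
Qed.

Lemma box_mass_recursion y :
  y%:R * box_mass y = \sum_(i < k) i.+1%:R * box_moment1 y i.
Proof.
rewrite /box_mass /box_moment1 mulr_sumr.
under [RHS]eq_bigr do rewrite mulr_sumr.
rewrite exchange_big /=; apply: eq_bigr => t /eqP <-.
rewrite /tdeg natr_sum mulr_suml; apply: eq_bigr => i _.
by rewrite natrM /tnat; ring.
Qed.

End Box.
Arguments tnat {n}.

Lemma box_mass_widen {p q y} : (y <= p)%N -> (p <= q)%N ->
  box_mass p y = box_mass q y.
Proof.
move=> yp pq.
pose widen (s : {ffun 'I_k -> 'I_p.+1}) : {ffun 'I_k -> 'I_q.+1} :=
  [ffun j => widen_ord (pq : p.+1 <= q.+1)%N (s j)].
pose shrink (t : {ffun 'I_k -> 'I_q.+1}) : {ffun 'I_k -> 'I_p.+1} :=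
  [ffun j => inord (t j)].
have tnat_widen s : tnat (widen s) = tnat s.
  by apply: funext => j; rewrite /tnat ffunE.
rewrite /box_mass (reindex_onto widen shrink); last first.
  move=> t /eqP deg_t; apply/ffunP => j; apply/val_inj; rewrite !ffunE /= inordK //.
  rewrite ltnS (leq_trans _ yp) // -deg_t (leq_trans _ (part_le_tdeg _ j)) //.
  by rewrite leq_pmull.
apply: eq_big => s; last by rewrite tnat_widen.
have -> : shrink (widen s) = s.
  by apply/ffunP => j; apply/val_inj; rewrite !ffunE /= inord_val.
by rewrite tnat_widen eqxx andbT.
Qed.

Lemma poisson_order_pmfE {n y} : (y <= n)%N ->
  poisson_order_pmf k lam y = expR (- (k%:R * lam)) * box_mass n y.
Proof.
move=> yn; rewrite -(box_mass_widen (leqnn y) yn) /poisson_order_pmf mulr_sumr.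
by apply: eq_bigr => t _; rewrite mulrA.
Qed.

Section Mode.
Context {m : nat}.
Hypothesis m_mode : is_mode (poisson_order_pmf k lam) m.

Let n := (m + k)%N.
Let mass := box_mass n.

Lemma mass_le_mode y : (y <= n)%N -> mass y <= mass m.
Proof.
move=> yn; have := m_mode y.
rewrite (poisson_order_pmfE yn) (poisson_order_pmfE (leq_addr k m)).
by rewrite ler_pM2l ?expR_gt0.
Qed.

Lemma mass_mode_gt0 : 0 < mass m.
Proof.
exact: lt_le_trans ltr01 (le_trans (box_mass0_ge1 n) (mass_le_mode 0 (leq0n n))).
Qed.

Lemma moment1_le_mode y (i : 'I_k) : (y <= m)%N -> box_moment1 n y i <= lam * mass m.
Proof.
move=> ym; have yn : (y <= n)%N by rewrite (leq_trans ym) ?leq_addr.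
have [iy|yi] := ltnP i y.
  rewrite box_moment1_shift // ler_pM2l // mass_le_mode //.
  exact: leq_trans (leq_subr _ _) yn.
by rewrite box_moment1_small // mulr_ge0 ?box_mass_ge0 // ltW.
Qed.

Lemma mode_le_sum : m%:R <= lam * (\sum_(i < k) i.+1)%N%:R.
Proof.
rewrite -(ler_pM2r mass_mode_gt0) /mass box_mass_recursion natr_sum.
rewrite -mulrA mulr_suml mulr_sumr; apply: ler_sum => i _.
by rewrite mulrCA ler_wpM2l ?moment1_le_mode.
Qed.

(* Cauchy-Schwarz between the first two moments of [t i] in degree [m + j.+1]. *)
Lemma mode_step j : (j < k)%N -> lam * mass m <= (lam + 1) * mass (m + j.+1).
Proof.
move=> jk; pose i := Ordinal jk; set y := (m + j.+1)%N.
have yn : (y <= n)%N by rewrite leq_add2l.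
have iy : (i < y)%N by rewrite ltn_addl.
have ym : (y - i.+1)%N = m by rewrite addnK.
set C := \sum_(t : {ffun 'I_k -> 'I_n.+1} | tdeg (tnat t) == y)
           tmass (tnat t) * (t i)%:R ^+ 2.
have B_eq : box_moment1 n y i = lam * mass m by rewrite box_moment1_shift ?ym.
have C_le : C <= lam * (lam * mass m + mass m).
  by rewrite /C box_moment2_shift // ym ler_pM2l // lerD2r moment1_le_mode.
have CS : box_moment1 n y i ^+ 2 <= mass y * C.
  by apply: sum_weighted_sqr_le => t _; apply: tmass_ge0.
have M_gt0 := mass_mode_gt0.
rewrite -(ler_pM2l (mulr_gt0 lam_gt0 M_gt0)) -expr2 -B_eq (le_trans CS) //.
have -> : box_moment1 n y i * ((lam + 1) * mass y)
    = mass y * (lam * (lam * mass m + mass m)) by rewrite B_eq; ring.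
by rewrite ler_wpM2l ?box_mass_ge0.
Qed.

Lemma mode_shift_lower (i : 'I_k) :
  lam * mass m + (i.+1 == k)%:R * mass m <= (lam + 1) * mass (m + k - i.+1).
Proof.
have [ik|] := eqVneq i.+1 k.
  by rewrite ik addnK /= mulr1n mulrDl !mul1r.
rewrite /= mulr0n mul0r addr0 => ik_neq.
have ik : (i.+1 < k)%N by rewrite ltn_neqAle ik_neq ltn_ord.
have jk : (k - i.+2 < k)%N by lia.
by rewrite (_ : (m + k - i.+1 = m + (k - i.+2).+1)%N) ?mode_step //; lia.
Qed.

Lemma mode_ge_sum :
  lam * (lam * (\sum_(i < k) i.+1)%N%:R + k%:R) <= (lam + 1) * (m + k)%:R.
Proof.
have M_gt0 := mass_mode_gt0.
have rec : (m + k)%:R * mass (m + k) =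
    lam * \sum_(i < k) i.+1%:R * mass (m + k - i.+1).
  rewrite /mass box_mass_recursion mulr_sumr; apply: eq_bigr => i _.
  by rewrite box_moment1_shift ?ltn_addl // mulrCA.
have sum_split : \sum_(i < k) i.+1%:R * (lam * mass m + (i.+1 == k)%:R * mass m)
    = (lam * (\sum_(i < k) i.+1)%N%:R + k%:R) * mass m.
  transitivity (\sum_(i < k)
      (lam * (i.+1%:R * mass m) + (i.+1 * (i.+1 == k))%N%:R * mass m)).
    by apply: eq_bigr => i _; rewrite natrM; ring.
  by rewrite big_split /= -mulr_sumr -!mulr_suml -!natr_sum sum_ord_succ_last; ring.
rewrite -(ler_pM2r M_gt0) -mulrA -sum_split.
apply: (@le_trans _ _ ((lam + 1) * ((m + k)%:R * mass (m + k)))).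
  rewrite rec mulrCA ler_pM2l // [leRHS]mulr_sumr; apply: ler_sum => i _.
  by rewrite mulrCA ler_wpM2l // mode_shift_lower.
by rewrite -mulrA ler_pM2l ?addr_gt0 // ler_wpM2l // mass_le_mode.
Qed.

End Mode.
End PoissonOrderMass.

Lemma mode_floor_bounds {R : realType} {k K m : nat} {lam : R} :
  (0 < k)%N -> K.*2 = (k * k.+1)%N -> 0 < lam ->
  m%:R <= lam * K%:R -> lam * (lam * K%:R + k%:R) <= (lam + 1) * (m + k)%:R ->
  Num.floor (lam * K%:R) - K%:Z + 1 - (if k == 1%N then 1 else 0) <= m%:Z
  /\ m%:Z <= Num.floor (lam * K%:R).
Proof.
move=> k_gt0 K2 lam_gt0 ub lb; split; last by rewrite floor_ge_int.
suff : Num.floor (lam * K%:R) < (m + K + (k == 1%N))%N%:Z.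
  by case: (k == 1%N) => /=; lia.
rewrite floor_lt_int -pmulrn !natrD; rewrite natrD in lb.
case: eqP => [k1 | k_neq1] /=.
  have K1 : K = 1%N by move: K2; rewrite k1; lia.
  rewrite K1 k1 in lb *; nra.
have : k.+1%:R <= K%:R :> R by rewrite ler_nat; nia.
rewrite -natr1; nra.
Qed.

Theorem theorem2p1 (R : realType) (k : nat) (lam : R) (m : nat) :
  (1 <= k)%N -> 0 < lam ->
  is_mode (poisson_order_pmf k lam) m ->
  Num.floor (lam * (k * k.+1)%:R / 2) - (k * k.+1)./2%:Z + 1
      - (if k == 1%N then 1 else 0) <= m%:Z
  /\ m%:Z <= Num.floor (lam * (k * k.+1)%:R / 2).
Proof.
move=> k_gt0 lam_gt0 m_mode.
have K2 := sum_ord_succ_double k; set K := (\sum_(i < k) i.+1)%N in K2.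
have -> : (k * k.+1)./2 = K by rewrite -K2 doubleK.
have -> : lam * (k * k.+1)%:R / 2 = lam * K%:R.
  by rewrite -K2 -mul2n natrM; field.
apply: (mode_floor_bounds k_gt0 K2 lam_gt0).
- exact: (mode_le_sum lam_gt0 m_mode).
- exact: (mode_ge_sum lam_gt0 m_mode).
Qed.
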